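(* Let $(\mathcal{E},\mathcal{L},\mathcal{B})$ be a weakly left resolving labelled space with associated inverse semigroup $S$, let $\alpha\in\mathcal{L}^\infty$ and let $\{\mathcal{F}_n\}_{n\ge0}$ be an admissible family for $\alpha$. Then \[\xi=\bigcup_{n=0}^\infty\bigcup_{A\in\mathcal{F}_n}\uparrow(\alpha_{1,n},A,\alpha_{1,n})\] is a filter in $E(S)$.
   Context: A directed graph $\mathcal{E}=(\mathcal{E}^0,\mathcal{E}^1,r,s)$ has countable nonempty vertex set, edge set, range/source maps; paths satisfy $r(\lambda_i)=s(\lambda_{i+1})$. A labelled graph has a surjective labelling $\mathcal{L}:\mathcal{E}^1\to\mathcal{A}$ extended letterwise to finite and infinite paths. $\omega$ is the empty word, $\mathcal{L}^+=\bigcup_{n\ge1}\mathcal{L}(\mathcal{E}^n)$, $\mathcal{L}^*=\{\omega\}\cup\mathcal{L}^+$, $\mathcal{L}^\infty$ the labels of infinite paths; $\alpha_{i,j}=\alpha_i\cdots\alpha_j$, $\alpha_{1,0}=\omega$. For $A\subseteq\mathcal{E}^0$, $\alpha\in\mathcal{L}^+$: $r(A,\alpha)=\{r(\lambda):\mathcal{L}(\lambda)=\alpha,\ s(\lambda)\in A\}$, $r(A,\omega)=A$, $r(\alpha)=r(\mathcal{E}^0,\alpha)$. $\mathcal{B}$ accommodating: closed under $r(\cdot,\alpha)$, finite intersections and unions, contains $r(\alpha)$ for $\alpha\in\mathcal{L}^+$; labelled space $(\mathcal{E},\mathcal{L},\mathcal{B})$ weakly left resolving if $r(A\cap B,\alpha)=r(A,\alpha)\cap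 r(B,\alpha)$ for $A,B\in\mathcal{B}$, $\alpha\in\mathcal{L}^+$. $\mathcal{B}_\alpha=\mathcal{B}\cap\mathcal{P}(r(\alpha))$. $S$ = triples $(\alpha,A,\beta)$, $\alpha,\beta\in\mathcal{L}^*$, $\emptyset\ne A\in\mathcal{B}_\alpha\cap\mathcal{B}_\beta$, plus $0$; product $(\alpha,A,\beta)(\gamma,B,\delta)=(\alpha\gamma',r(A,\gamma')\cap B,\delta)$ if $\gamma=\beta\gamma'$, $=(\alpha,A\cap r(B,\beta'),\delta\beta')$ if $\beta=\gamma\beta'$, $=0$ otherwise (empty middle entry identified with $0$). $E(S)=\{(\alpha,A,\alpha)\}\cup\{0\}$, $p\le q$ iff $pq=p$; $(\alpha,A,\alpha)\le(\beta,B,\beta)$ iff $\alpha=\beta\alpha'$ and $A\subseteq r(B,\alpha')$; $\uparrow x=\{y:x\le y\}$. A filter in a poset with least element $0$ is a nonempty upward-closed subset not containing $0$ in which any two elements have a common lower bound in it. A family $\{\mathcal{F}_n\}_{n\ge0}$ with $\mathcal{F}_n$ a filter in $\mathcal{B}_{\alpha_{1,n}}$ for $n>0$ and $\mathcal{F}_0$ a filter in $\mathcal{B}$ or empty is admissible for $\alpha$ if $\mathcal{F}_n\subseteq\{A\in\mathcal{B}_{\alpha_{1,n}}:r(A,\alpha_{n+1})\in\mathcal{F}_{n+1}\}$ for all $n\ge0$. *)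

From Stdlib Require Import List Arith.
Import ListNotations.
Set Implicit Arguments.

Section LS.
Variables (V Ed Alph : Type) (src rng : Ed -> V) (lab : Ed -> Alph).

Definition vset := V -> Prop.

(* countable (possibly empty) type *)
Definition countable (T : Type) : Prop :=
  exists f : nat -> option T, forall x, exists n, f n = Some x.

Definition labelled_graph : Prop :=
  countable V /\ (exists v : V, True) /\ countable Ed /\
  (forall a : Alph, exists e, lab e = a).

Fixpoint consec (l : list Ed) : Prop :=
  match l with
  | e1 :: ((e2 :: _) as t) => rng e1 = src e2 /\ consec t
  | _ => True
  end.

Definition Lplus (w : list Alph) : Prop :=
  exists e l, consec (e :: l) /\ map lab (e :: l) = w.
Definition Lstar (w : list Alph) : Prop := w = [] \/ Lplus w.

Definition Linf (alpha : nat -> Alph) : Prop :=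
  exists p : nat -> Ed, (forall i, rng (p i) = src (p (S i))) /\
                        (forall i, lab (p i) = alpha i).

Definition rset (A : vset) (w : list Alph) : vset :=
  fun v => match w with
  | [] => A v
  | _ => exists e l, consec (e :: l) /\ map lab (e :: l) = w /\
                     A (src e) /\ v = rng (last (e :: l) e)
  end.

Definition rword (w : list Alph) : vset := rset (fun _ => True) w.

Definition inter (A B : vset) : vset := fun v => A v /\ B v.
Definition union (A B : vset) : vset := fun v => A v \/ B v.
Definition subset (A B : vset) : Prop := forall v, A v -> B v.
Definition seteq (A B : vset) : Prop := forall v, A v <-> B v.

Variable BB : vset -> Prop.

Definition accommodating : Prop :=
  (forall A w, BB A -> Lplus w -> BB (rset A w)) /\
  (forall A B, BB A -> BB B -> BB (inter A B)) /\
  (forall A B, BB A -> BB B -> BB (union A B)) /\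
  (forall w, Lplus w -> BB (rword w)).

Definition weakly_left_resolving : Prop :=
  forall A B w, BB A -> BB B -> Lplus w ->
    seteq (rset (inter A B) w) (inter (rset A w) (rset B w)).

Definition Bsub (w : list Alph) (A : vset) : Prop := BB A /\ subset A (rword w).

(* The inverse semigroup S: None = 0, Some (a, A, b) = (a, A, b). *)
Definition Selt := option (list Alph * vset * list Alph).

Definition inS (p : Selt) : Prop :=
  match p with
  | None => True
  | Some (a, A, b) => Lstar a /\ Lstar b /\ (exists v, A v) /\ Bsub a A /\ Bsub b A
  end.

(* (a, X, d) with empty middle entry identified with 0 *)
Definition mk (a : list Alph) (X : vset) (d : list Alph) (r : Selt) : Prop :=
  ((forall v, ~ X v) /\ r = None) \/ ((exists v, X v) /\ r = Some (a, X, d)).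

(* the product, as a relation: mulS p q r  <->  p q = r *)
Definition mulS (p q r : Selt) : Prop :=
  match p, q with
  | Some (a, A, b), Some (c, B, d) =>
      (exists c', c = b ++ c' /\ mk (a ++ c') (inter (rset A c') B) d r)
   \/ (exists b', b = c ++ b' /\ mk a (inter A (rset B b')) (d ++ b') r)
   \/ ((forall c', c <> b ++ c') /\ (forall b', b <> c ++ b') /\ r = None)
  | _, _ => r = None
  end.

Definition inES (p : Selt) : Prop :=
  inS p /\ match p with None => True | Some (a, _, b) => a = b end.
Definition leS (p q : Selt) : Prop := mulS p q p.

Definition upset (x y : Selt) : Prop := inES y /\ leS x y.

Definition filterES (xi : Selt -> Prop) : Prop :=
  (exists x, xi x) /\
  (forall x, xi x -> inES x) /\
  (forall x y, xi x -> inES y -> leS x y -> xi y) /\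
  ~ xi None /\
  (forall x y, xi x -> xi y -> exists z, xi z /\ leS z x /\ leS z y).

Definition filterB (w : list Alph) (F : vset -> Prop) : Prop :=
  (exists X, F X) /\
  (forall X, F X -> Bsub w X) /\
  (forall X Y, F X -> Bsub w Y -> subset X Y -> F Y) /\
  (forall X, F X -> exists v, X v) /\
  (forall X Y, F X -> F Y -> exists Z, F Z /\ subset Z X /\ subset Z Y).

(* alpha_{1,n}, with alpha indexed from 0: alpha_{i+1} = alpha i *)
Definition pre (alpha : nat -> Alph) (n : nat) : list Alph := map alpha (seq 0 n).

Definition admissible (alpha : nat -> Alph) (F : nat -> vset -> Prop) : Prop :=
  ((forall X, ~ F 0 X) \/ filterB [] (F 0)) /\
  (forall n, 0 < n -> filterB (pre alpha n) (F n)) /\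
  (forall n X, F n X -> Bsub (pre alpha n) X /\ F (S n) (rset X [alpha n])).

Definition xi_of (alpha : nat -> Alph) (F : nat -> vset -> Prop) (y : Selt) : Prop :=
  exists n X, F n X /\ upset (Some (pre alpha n, X, pre alpha n)) y.

End LS.

From Stdlib Require Import List Arith Lia FunctionalExtensionality PropExtensionality.
Import ListNotations.
Set Implicit Arguments.

(* On idempotents, (a, A, a) <= (b, B, b) iff a = b b' and
   A ⊆ r(B, b'); this order is transitive because r(r(C, u), w) ⊆ r(C, u w).
   Each generator (α_{1,n}, X, α_{1,n}) of ξ is a nonzero idempotent.  Given
   generators at levels n <= m, admissibility pushes X ∈ F_n to some
   Y ∈ F_m with Y ⊆ r(X, α_{n+1,m}), and a common lower bound in the filter
   F_m of Y and the other generator gives a common lower bound in ξ. *)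

Section LabelledPaths.
Variables (V Ed Alph : Type) (src rng : Ed -> V) (lab : Ed -> Alph).

Notation rset := (rset src rng lab).
Notation leS := (leS src rng lab).

Lemma last_cons_default (e : Ed) l d d' : last (e :: l) d = last (e :: l) d'.
Proof.
  revert e; induction l as [|e' l IH]; intros e; simpl; auto.
  specialize (IH e'). simpl in IH. destruct l; auto.
Qed.

Lemma last_app_cons (l1 l2 : list Ed) e d :
  last (l1 ++ e :: l2) d = last (e :: l2) e.
Proof.
  induction l1 as [|e' l1 IH]; simpl.
  - apply last_cons_default.
  - rewrite IH. destruct l1; simpl; auto; destruct l2; auto.
Qed.

Lemma consec_app e1 l1 e2 l2 d :
  consec src rng (e1 :: l1) -> consec src rng (e2 :: l2) ->
  rng (last (e1 :: l1) d) = src e2 -> consec src rng (e1 :: l1 ++ e2 :: l2).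
Proof.
  revert e1; induction l1 as [|e l1 IH]; intros e1 H1 H2 H3; simpl in *.
  - split; auto.
  - destruct H1 as [H1 H1']. split; auto. apply IH; auto.
Qed.

Lemma rset_mono A B w : subset A B -> subset (rset A w) (rset B w).
Proof.
  intros HAB v Hv. destruct w; [apply HAB; exact Hv|].
  destruct Hv as (e & l & Hc & Hl & Hs & ->). exists e, l. repeat split; auto.
Qed.

Lemma rset_app C u w : subset (rset (rset C u) w) (rset C (u ++ w)).
Proof.
  intros v Hv. destruct u as [|x u]; [exact Hv|].
  destruct w as [|y w]; [rewrite app_nil_r; exact Hv|].
  destruct Hv as (e2 & l2 & Hc2 & Hl2 & (e1 & l1 & Hc1 & Hl1 & Hs1 & Hv1) & ->).
  exists e1, (l1 ++ e2 :: l2). split; [|split; [|split]].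
  - apply consec_app with (d := e1); auto.
  - simpl in Hl1, Hl2 |- *. injection Hl1 as <- <-. injection Hl2 as <- <-.
    rewrite map_app. reflexivity.
  - exact Hs1.
  - change (e1 :: l1 ++ e2 :: l2) with ((e1 :: l1) ++ e2 :: l2).
    rewrite last_app_cons. reflexivity.
Qed.

(* The middle entry of a product is a predicate, so [pq = p] needs
   extensionality to identify [A ∩ r(B, b')] with [A]. *)
Lemma leS_idem_iff a A b B :
  (exists v, A v) ->
  leS (Some (a, A, a)) (Some (b, B, b)) <->
  exists b', a = b ++ b' /\ subset A (rset B b').
Proof.
  intros HA. unfold leS, mulS. split.
  - intros [(c' & Hc & Hmk) | [(b' & Hb & Hmk) | (_ & _ & H)]]; try discriminate.
    + destruct Hmk as [[_ H]|[_ H]]; [discriminate|]. injection H as Ha HAeq.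
      assert (c' = []) as ->.
      { apply (f_equal (@length Alph)) in Ha. rewrite length_app in Ha.
        destruct c'; simpl in Ha; [reflexivity|lia]. }
      exists []. rewrite app_nil_r. split; auto.
      intros v Hv. rewrite HAeq in Hv. apply Hv.
    + destruct Hmk as [[_ H]|[_ H]]; [discriminate|]. injection H as HAeq _.
      exists b'. split; auto. intros v Hv. rewrite HAeq in Hv. apply Hv.
  - intros (b' & Hb & HAB). right; left. exists b'. split; auto. right.
    replace (inter A (rset B b')) with A.
    + split; auto. rewrite <- Hb. reflexivity.
    + apply functional_extensionality; intro v. apply propositional_extensionality.
      unfold inter. split; auto. tauto.
Qed.

Lemma leS_idem_refl a A : (exists v, A v) -> leS (Some (a, A, a)) (Some (a, A, a)).
Proof.
  intros HA. apply leS_idem_iff; auto. exists []. rewrite app_nil_r. split; auto.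
  intros v Hv; exact Hv.
Qed.

Lemma leS_idem_trans a A b B c C :
  (exists v, A v) -> (exists v, B v) ->
  leS (Some (a, A, a)) (Some (b, B, b)) ->
  leS (Some (b, B, b)) (Some (c, C, c)) ->
  leS (Some (a, A, a)) (Some (c, C, c)).
Proof.
  intros HA HB Hab Hbc. apply leS_idem_iff in Hab, Hbc; auto. apply leS_idem_iff; auto.
  destruct Hab as (b' & -> & Hab). destruct Hbc as (c' & -> & Hbc).
  exists (c' ++ b'). split; [symmetry; apply app_assoc|].
  intros v Hv. apply rset_app. eapply rset_mono; [exact Hbc|]. apply Hab, Hv.
Qed.

Lemma leS_None_r {x} : ~ leS (Some x) None.
Proof. destruct x as [[a A] b]. discriminate. Qed.

Lemma consec_seq (p : nat -> Ed) :
  (forall i, rng (p i) = src (p (S i))) ->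
  forall n k, consec src rng (p k :: map p (seq (S k) n)).
Proof.
  intros Hp n. induction n as [|n IH]; intros k; simpl; auto.
  split; auto. apply IH.
Qed.

Lemma Linf_pre_Lstar alpha n : Linf src rng lab alpha -> Lstar src rng lab (pre alpha n).
Proof.
  intros (p & Hp & Hlab). destruct n as [|n]; [left; reflexivity|]. right.
  exists (p 0), (map p (seq 1 n)). split; [apply consec_seq; auto|].
  unfold pre. simpl. rewrite Hlab, map_map. f_equal. apply map_ext. auto.
Qed.

Lemma pre_add (alpha : nat -> Alph) n k : pre alpha (k + n) = pre alpha n ++ map alpha (seq n k).
Proof. unfold pre. rewrite Nat.add_comm, seq_app, map_app. reflexivity. Qed.

End LabelledPaths.

Section AdmissibleFamily.
Variables (V Ed Alph : Type) (src rng : Ed -> V) (lab : Ed -> Alph).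
Variable BB : (V -> Prop) -> Prop.
Variables (alpha : nat -> Alph) (F : nat -> (V -> Prop) -> Prop).
Hypothesis Hadm : admissible src rng lab BB alpha F.

Notation rset := (rset src rng lab).
Notation leS := (leS src rng lab).
Notation gen n X := (Some (pre alpha n, X, pre alpha n)).
Notation xi := (xi_of src rng lab BB alpha F).

Lemma admissible_filterB n X : F n X -> filterB src rng lab BB (pre alpha n) (F n).
Proof.
  destruct Hadm as (H0 & Hpos & _). intros HX. destruct n as [|n].
  - destruct H0 as [H0|H0]; [exfalso; eapply H0; eauto|exact H0].
  - apply Hpos. lia.
Qed.

Lemma admissible_nonempty n X : F n X -> exists v, X v.
Proof. intros HX. destruct (admissible_filterB HX) as (_ & _ & _ & Hne & _). auto. Qed.

Lemma admissible_push k n X :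
  F n X -> exists Y, F (k + n) Y /\ subset Y (rset X (map alpha (seq n k))).
Proof.
  destruct Hadm as (_ & _ & Hstep). intros HX. induction k as [|k IH].
  - exists X. split; auto. intros v Hv; exact Hv.
  - destruct IH as (Y & HY & HYX). exists (rset Y [alpha (k + n)]). split.
    + apply (Hstep _ _ HY).
    + rewrite seq_S, map_app, Nat.add_comm.
      intros v Hv. apply rset_app. eapply rset_mono; [exact HYX|]. exact Hv.
Qed.

Lemma admissible_gen_lower_bound n X m Y :
  n <= m -> F n X -> F m Y ->
  exists Z, F m Z /\ leS (gen m Z) (gen n X) /\ leS (gen m Z) (gen m Y).
Proof.
  intros Hnm HX HY.
  destruct (admissible_push (m - n) HX) as (Y' & HY' & HY'X).
  replace (m - n + n) with m in HY' by lia.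
  destruct (admissible_filterB HY) as (_ & _ & _ & _ & Hdir).
  destruct (Hdir Y' Y HY' HY) as (Z & HZ & HZY' & HZY).
  pose proof (admissible_nonempty HZ) as HZne.
  exists Z. split; [exact HZ|split]; apply leS_idem_iff; auto.
  - exists (map alpha (seq n (m - n))). split.
    + rewrite <- pre_add. f_equal. lia.
    + intros v Hv. apply HY'X, HZY', Hv.
  - exists []. rewrite app_nil_r. split; auto.
Qed.

Hypothesis Halpha : Linf src rng lab alpha.

Lemma gen_inES n X : F n X -> inES src rng lab BB (gen n X).
Proof.
  destruct Hadm as (_ & _ & Hstep). intros HX. split; [|reflexivity].
  destruct (Hstep n X HX) as [HB _].
  pose proof (Linf_pre_Lstar n Halpha) as Hpre.
  exact (conj Hpre (conj Hpre (conj (admissible_nonempty HX) (conj HB HB)))).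
Qed.

Lemma gen_in_xi {n X} : F n X -> xi (gen n X).
Proof.
  intros HX. exists n, X. split; auto. split; [apply gen_inES; auto|].
  apply leS_idem_refl, (admissible_nonempty HX).
Qed.

Lemma xi_inv x :
  xi x -> exists n X b B, F n X /\ x = Some (b, B, b) /\ (exists v, B v) /\
                          leS (gen n X) (Some (b, B, b)).
Proof.
  intros (n & X & HX & Hx & Hle). destruct x as [[[a B] b]|].
  - destruct Hx as [(_ & _ & HB & _) Hab]. simpl in Hab. subst b.
    exists n, X, a, B. auto.
  - exfalso. exact (leS_None_r src rng lab Hle).
Qed.

Lemma xi_upward_closed x y :
  xi x -> inES src rng lab BB y -> leS x y -> xi y.
Proof.
  intros Hx Hy Hxy.
  destruct (xi_inv Hx) as (n & X & b & B & HX & -> & HB & Hle).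
  destruct y as [[[c C] d]|]; [|exfalso; exact (leS_None_r src rng lab Hxy)].
  exists n, X. split; auto. split; auto.
  destruct Hy as [_ Hcd]. simpl in Hcd. subst d.
  eapply leS_idem_trans; eauto. apply (admissible_nonempty HX).
Qed.

Lemma xi_directed x y :
  xi x -> xi y -> exists z, xi z /\ leS z x /\ leS z y.
Proof.
  intros Hx Hy.
  destruct (xi_inv Hx) as (n & X & b & B & HX & -> & HB & HXB).
  destruct (xi_inv Hy) as (m & Y & c & C & HY & -> & HC & HYC).
  pose proof (admissible_nonempty HX). pose proof (admissible_nonempty HY).
  destruct (le_ge_dec n m) as [Hnm|Hmn].
  - destruct (admissible_gen_lower_bound Hnm HX HY) as (Z & HZ & HZX & HZY).
    pose proof (admissible_nonempty HZ).
    exists (gen m Z). split; [apply gen_in_xi; auto|split].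
    + apply leS_idem_trans with (pre alpha n) X; auto.
    + apply leS_idem_trans with (pre alpha m) Y; auto.
  - destruct (admissible_gen_lower_bound Hmn HY HX) as (Z & HZ & HZY & HZX).
    pose proof (admissible_nonempty HZ).
    exists (gen n Z). split; [apply gen_in_xi; auto|split].
    + apply leS_idem_trans with (pre alpha n) X; auto.
    + apply leS_idem_trans with (pre alpha m) Y; auto.
Qed.

End AdmissibleFamily.

Theorem mainTheorem6 (V Ed Alph : Type) (src rng : Ed -> V) (lab : Ed -> Alph)
  (BB : (V -> Prop) -> Prop)
  (Hgraph : labelled_graph V lab)
  (Hacc : accommodating src rng lab BB)
  (Hwlr : weakly_left_resolving src rng lab BB)
  (alpha : nat -> Alph) (Halpha : Linf src rng lab alpha)
  (F : nat -> (V -> Prop) -> Prop)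
  (Hadm : admissible src rng lab BB alpha F) :
  filterES src rng lab BB (xi_of src rng lab BB alpha F).
Proof.
  split; [|split; [|split; [|split]]].
  - destruct (proj1 (proj2 Hadm) 1 ltac:(lia)) as ((X & HX) & _).
    eexists. exact (gen_in_xi Hadm Halpha HX).
  - intros x (n & X & _ & Hx & _). exact Hx.
  - apply (xi_upward_closed Hadm).
  - intros Hxi. destruct (xi_inv Hxi) as (n & X & b & B & _ & H & _). discriminate.
  - apply (xi_directed Hadm Halpha).
Qed.
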